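(* In the setting described in the context, every feasible solution of RLO-CCU-SD satisfies $\Gamma\in\Theta$ and $\Gamma_{\hat{i}}=\underline{\Gamma}_{\hat{i}}$ for some $\hat{i}\in\hat{I}$. Conversely, if $\sum_{j\in J}a_{ij}\hat{x}_j\ge b_i$ for all $i\in I$, then for every $\Gamma\in\Theta$ satisfying $\Gamma_{\hat{i}}=\underline{\Gamma}_{\hat{i}}$ for some $\hat{i}\in\hat{I}$ there exists $(c,u,y,z,\pi,\varphi,\lambda,\mu)$ such that $(\Gamma,c,u,y,z,\pi,\varphi,\lambda,\mu)$ is feasible for RLO-CCU-SD.
   Context: Let $I=\{1,\dots,m\}$, $J=\{1,\dots,n\}$. Given are $a_{ij}\in\mathbb{R}$, $b\in\mathbb{R}^m$, index sets $J_i\subseteq J$, nonnegative numbers $\alpha_{ij}$ ($j\in J_i,i\in I$), an observed point $\hat{x}\in\mathbb{R}^n$, a prior $\hat{\Gamma}\in\mathbb{R}^m$ and a norm $\|\cdot\|$ on $\mathbb{R}^m$. For $i\in I$ and $x\in\mathbb{R}^n$ let $j^i_1(x),\dots,j^i_{|J_i|}(x)$ order $J_i$ so that $\alpha_{ij^i_k(x)}|x_{j^i_k(x)}|$ is the $k$-th largest element of $\{\alpha_{ij}|x_j|\}_{j\in J_i}$, and for $\Gamma_i\in[0,|J_i|]$ let $P_i(\Gamma_i,x)=\sum_{k=1}^{\lfloor\Gamma_i\rfloor}\alpha_{ij^i_k(x)}|x_{j^i_k(x)}|+(\Gamma_i-\lfloor\Gamma_i\rfloor)\alpha_{ij^i_{\lceil\Gamma_i\rceil}(x)}|x_{j^i_{\lceil\Gamma_i\rceil}(x)}|$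 (last term $0$ for integer $\Gamma_i$). Let $s_i=\sum_{j\in J}a_{ij}\hat{x}_j-b_i$, $\hat{I}=\{i\in I:0\le s_i\le\sum_{j\in J_i}\alpha_{ij}|\hat{x}_j|\}$, and for $i\in\hat{I}$ let $\underline{\Gamma}_i=\min\{\sum_{j\in J_i}w_j:\sum_{j\in J_i}\alpha_{ij}|\hat{x}_j|w_j=s_i,\ 0\le w_j\le1\}$, so $s_i=P_i(\underline{\Gamma}_i,\hat{x})$. Standing assumption: for each $i\in\hat{I}$, $\underline{\Gamma}_i$ is the unique $\Gamma_i\in[0,|J_i|]$ with $s_i=P_i(\Gamma_i,\hat{x})$. Let $\Theta=\{\Gamma\in\mathbb{R}^m:\Gamma_i\in[0,\underline{\Gamma}_i]\ \forall i\in\hat{I};\ \Gamma_i\in[0,|J_i|]\ \forall i\in I\setminus\hat{I}\}$. The problem RLO-CCU-SD is \[ \min_{\Gamma,c,u,y,z,\pi,\varphi,\lambda,\mu}\ \|\Gamma-\hat{\Gamma}\| \] subject to: $\sum_{j\in J}c_j\hat{x}_j-\sum_{i\in I}b_i\pi_i=0$; $\alpha_{ij}\hat{x}_j+u_{ij}\ge0$ and $-\alpha_{ij}\hat{x}_j+u_{ij}\ge0$ ($j\in J_i,i\in I$); $y_{ij}+z_i\ge u_{ij}$ ($j\in J_i,i\in I$); $\sum_{j\in J}a_{ij}\hat{x}_j-\sum_{j\in J_i}y_{ij}-\Gamma_iz_i\ge b_i$ ($i\in I$); $y_{ij},z_i\ge0$; $0\le\Gamma_i\le|J_i|$ ($i\in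 I$); $\sum_{i\in I}\pi_i=1$; $\sum_{i\in I}a_{ij}\pi_i+\sum_{i\in I:j\in J_i}\alpha_{ij}(\lambda_{ij}-\mu_{ij})=c_j$ ($j\in J$); $\varphi_{ij}\le\pi_i$ and $\varphi_{ij}=\lambda_{ij}+\mu_{ij}$ ($j\in J_i,i\in I$); $\sum_{j\in J_i}\varphi_{ij}\le\Gamma_i\pi_i$ ($i\in I$); $\pi_i,\varphi_{ij},\lambda_{ij},\mu_{ij}\ge0$ ($j\in J_i,i\in I$). *)

From mathcomp Require Import all_boot all_order all_algebra.
From mathcomp Require Import reals.
Set Implicit Arguments. Unset Strict Implicit. Unset Printing Implicit Defensive.
Import Order.TTheory GRing.Theory Num.Theory.
Local Open Scope ring_scope.

Section RLO.
Variables (R : realType) (m n : nat).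
Variables (a : 'I_m -> 'I_n -> R) (b : 'I_m -> R) (Js : 'I_m -> {set 'I_n})
          (alpha : 'I_m -> 'I_n -> R) (xhat : 'I_n -> R).

(* the values {alpha_ij |x_j|}_{j in J_i} sorted in nonincreasing order:
   the k-th largest (1-indexed) is (sorted_vals i x)`_(k-1) *)
Definition sorted_vals (i : 'I_m) (x : 'I_n -> R) : seq R :=
  sort (fun u v => v <= u) [seq alpha i j * `|x j| | j <- enum (Js i)].

(* P_i(G, x) = sum_{k=1}^{floor G} (k-th largest) + (G - floor G) (ceil G-th largest);
   for G >= 0 non-integer, ceil G = floor G + 1, i.e. 0-based index floor G;
   for integer G the last term vanishes since G - floor G = 0. *)
Definition Pfun (i : 'I_m) (G : R) (x : 'I_n -> R) : R :=
  \sum_(k < Num.truncn G) (sorted_vals i x)`_k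
  + (G - (Num.truncn G)%:R) * (sorted_vals i x)`_(Num.truncn G).

Definition sres (i : 'I_m) : R := \sum_(j < n) a i j * xhat j - b i.

Definition in_Ihat (i : 'I_m) : Prop :=
  0 <= sres i /\ sres i <= \sum_(j in Js i) alpha i j * `|xhat j|.

Definition lp_feasible_w (i : 'I_m) (w : 'I_n -> R) : Prop :=
  \sum_(j in Js i) alpha i j * `|xhat j| * w j = sres i /\
  (forall j, j \in Js i -> 0 <= w j /\ w j <= 1).

Definition is_Gamma_low (i : 'I_m) (g : R) : Prop :=
  (exists w, lp_feasible_w i w /\ \sum_(j in Js i) w j = g) /\
  (forall w, lp_feasible_w i w -> g <= \sum_(j in Js i) w j).

Definition Theta (gl : 'I_m -> R) (G : 'I_m -> R) : Prop :=
  forall i, (in_Ihat i -> 0 <= G i /\ G i <= gl i) /\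
            (~ in_Ihat i -> 0 <= G i /\ G i <= #|Js i|%:R).

Definition feasible (G : 'I_m -> R) (c : 'I_n -> R) (u y : 'I_m -> 'I_n -> R)
  (z pi : 'I_m -> R) (phi lam mu : 'I_m -> 'I_n -> R) : Prop :=
  [/\ \sum_(j < n) c j * xhat j - \sum_(i < m) b i * pi i = 0,
      (forall i j, j \in Js i ->
         [/\ alpha i j * xhat j + u i j >= 0 /\ - alpha i j * xhat j + u i j >= 0,
             y i j + z i >= u i j, y i j >= 0,
             phi i j <= pi i /\ phi i j = lam i j + mu i j &
             [/\ phi i j >= 0, lam i j >= 0 & mu i j >= 0]]),
      (forall i, [/\ \sum_(j < n) a i j * xhat j - \sum_(j in Js i) y i j - G i * z i >= b i,
         z i >= 0, 0 <= G i /\ G i <= #|Js i|%:R,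
         \sum_(j in Js i) phi i j <= G i * pi i & pi i >= 0]),
      \sum_(i < m) pi i = 1 &
      (forall j, \sum_(i < m) a i j * pi i
                 + \sum_(i < m | j \in Js i) alpha i j * (lam i j - mu i j) = c j)].

End RLO.

From mathcomp Require Import all_boot all_order all_algebra.
From mathcomp Require Import reals.
From mathcomp Require Import ring lra.
Import Order.TTheory GRing.Theory Num.Theory.
Local Open Scope ring_scope.

(* For each row i, Gamma_low_i is the value of the covering LP
   min {sum_j w_j : sum_j alpha_ij |xhat_j| w_j = s_i, 0 <= w_j <= 1}.
   Weak duality for this LP turns any robust certificate (y_i, z_i) of row i
   into z_i Gamma_i <= z_i Gamma_low_i, hence Gamma in Theta (when z_i = 0 the
   row is covered by y_i alone, s_i = P_i(|J_i|), and uniqueness gives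
   Gamma_low_i = |J_i|).  The optimality condition c'xhat = b'pi says that the
   row slacks pi_i s_i + sum_j alpha_ij xhat_j (lambda_ij - mu_ij), which are
   nonnegative, add up to 0; on a row with pi_i > 0 the weights phi_i / pi_i
   rescale to a cover of s_i of total weight at most Gamma_i, so
   Gamma_i = Gamma_low_i there.  Conversely an optimal cover is greedy: it
   saturates every j whose alpha_ij |xhat_j| exceeds the smallest value on its
   support theta_i, which makes z_i = theta_i, y_ij = (alpha_ij |xhat_j| - theta_i)^+
   a robust certificate for every Gamma_i <= Gamma_low_i; the dual part is
   supported on the tight row, with phi its optimal cover. *)

Lemma sumr_delta (R : nmodType) (I : finType) (P : pred I) (F : I -> R) k :
  \sum_(i | P i) F i *+ (i == k) = F k *+ P k.
Proof.
case Pk: (P k); last by rewrite big1 // => i Pi; case: eqP Pi => // ->; rewrite Pk.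
by rewrite (bigD1 k) //= eqxx big1 ?addr0 // => i /andP[_ /negbTE ->].
Qed.

Section FractionalCover.
Context {R : realFieldType} {I : finType}.
Variables (A : {set I}) (v : I -> R).
Hypothesis v_ge0 : forall l, l \in A -> 0 <= v l.

Definition unit_weights (w : I -> R) := forall l, l \in A -> 0 <= w l /\ w l <= 1.

Definition is_cover (s : R) (w : I -> R) :=
  \sum_(l in A) v l * w l = s /\ unit_weights w.

Definition min_cover (s : R) (w : I -> R) :=
  is_cover s w /\ forall w', is_cover s w' -> \sum_(l in A) w l <= \sum_(l in A) w' l.

Lemma unit_weights_sum_le_card w : unit_weights w -> \sum_(l in A) w l <= #|A|%:R.
Proof. by move=> w01; rewrite -sumr_const; apply: ler_sum => l /w01[]. Qed.

Lemma cover_rescale {s w} : unit_weights w -> 0 <= s -> s <= \sum_(l in A) v l * w l ->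
  exists2 w', is_cover s w' & \sum_(l in A) w' l <= \sum_(l in A) w l.
Proof.
move=> w01 s0 sS; set S := \sum_(l in A) v l * w l in sS.
have [S0|S0] := eqVneq S 0.
  by exists w => //; split => //; rewrite -/S; lra.
have Sgt0 : 0 < S by rewrite lt_neqAle eq_sym S0 (le_trans s0 sS).
have t0 : 0 <= s / S by rewrite divr_ge0 // ltW.
have t1 : s / S <= 1 by rewrite ler_pdivrMr ?mul1r.
exists (fun l => s / S * w l).
  split; first by rewrite -[RHS](divfK S0) mulrC /S mulr_sumr; apply: eq_bigr => l _; ring.
  by move=> l /w01[w0 w1]; split; nra.
rewrite -mulr_sumr ler_piMl // sumr_ge0 // => l /w01[] //.
Qed.

Lemma weighted_sum_le_dominated {y phi : I -> R} {z p : R} :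
  (forall l, l \in A -> 0 <= y l /\ v l <= y l + z) ->
  (forall l, l \in A -> 0 <= phi l /\ phi l <= p) ->
  \sum_(l in A) v l * phi l <= p * \sum_(l in A) y l + z * \sum_(l in A) phi l.
Proof.
move=> yz phi01; rewrite mulr_sumr mulr_sumr -big_split /=.
by apply: ler_sum => l lA; have [y0 vyz] := yz l lA; have [f0 fp] := phi01 l lA; nra.
Qed.

(* Otherwise moving weight e from k to e * v k / v j on j keeps the cover and
   decreases its total weight. *)
Lemma min_cover_exchange {s w} j k : min_cover s w ->
  j \in A -> k \in A -> v k < v j -> 0 < w k -> w j = 1.
Proof.
move=> [[sw w01] opt] jA kA vkj wk.
have [[wj0 wj1] [wk0 wk1]] := (w01 j jA, w01 k kA).
have vk0 := v_ge0 k kA; have vj0 : 0 < v j by apply: le_lt_trans vkj.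
have kj : (k == j) = false by apply/eqP => E; rewrite E ltxx in vkj.
have jk : (j == k) = false by rewrite eq_sym.
apply/eqP; rewrite eq_le wj1 leNgt; apply/negP => wj_lt1.
pose e := Num.min (w k) (1 - w j); pose r := v k / v j.
have e0 : 0 < e by rewrite lt_min wk subr_gt0 wj_lt1.
have [ewk ewj] : e <= w k /\ e <= 1 - w j by rewrite !ge_min !lexx orbT.
have r0 : 0 <= r by rewrite divr_ge0 // ltW.
have r1 : r < 1 by rewrite ltr_pdivrMr // mul1r.
have vjr : v j * r = v k by rewrite mulrC divfK ?gt_eqF.
pose w' l := w l + (e * r) *+ (l == j) - e *+ (l == k).
have shift (F : I -> R) : \sum_(l in A) F l * w' l =
    \sum_(l in A) F l * w l + F j * (e * r) - F k * e.
  rewrite /w'; under eq_bigr do rewrite mulrBr mulrDr !mulrnAr.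
  by rewrite sumrB big_split /= !sumr_delta jA kA.
have : \sum_(l in A) w l <= \sum_(l in A) w' l.
  apply: opt; split.
    by rewrite shift sw mulrCA vjr [e * _]mulrC addrK.
  move=> l lA; have [wl0 wl1] := w01 l lA; rewrite /w'.
  case: (eqVneq l j) => [->|lj]; first by rewrite jk /=; split; nra.
  by case: (eqVneq l k) => [->|lk] /=; rewrite ?kj ?eqxx /=; split; nra.
have -> : \sum_(l in A) w' l = \sum_(l in A) w l + e * r - e.
  by rewrite sumrB big_split /= !sumr_delta jA kA.
nra.
Qed.

Lemma min_cover_threshold {s w} : min_cover s w -> exists2 th, 0 <= th &
  \sum_(l in A) Num.max (v l - th) 0 + (\sum_(l in A) w l) * th = s.
Proof.
move=> w_min; have [[sw w01] _] := w_min.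
have [th th0 [supp_le sat]] : exists2 th, 0 <= th &
    (forall l, l \in A -> 0 < w l -> th <= v l) /\
    (forall l, l \in A -> th < v l -> w l = 1).
  case: (pickP [pred l | (l \in A) && (0 < w l)]) => [k0 Pk0 | supp0].
    case: (arg_minP v Pk0) => k /andP[kA wk] kmin.
    exists (v k); first exact: v_ge0.
    split=> [l lA wl | l lA vkl]; first by apply: kmin; rewrite /= lA.
    exact: min_cover_exchange w_min lA kA vkl wk.
  exists (\sum_(k in A) v k); first exact: sumr_ge0.
  split=> [l lA wl | l lA]; first by have := supp0 l; rewrite /= lA wl.
  by rewrite ltNge (bigD1 l) //= lerDl sumr_ge0 // => k /andP[/v_ge0].
exists th => //; rewrite -sw mulr_suml -big_split /=; apply: eq_bigr => l lA.
have [wl0 wl1] := w01 l lA.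
case: (ltrP th (v l)) => [thv|vth].
  by rewrite sat // max_l ?subr_ge0 ?ltW //; ring.
rewrite max_r ?subr_le0 // add0r.
have [->|wl_neq0] := eqVneq (w l) 0; first by rewrite mulr0 mul0r.
have wl_gt0 : 0 < w l by rewrite lt_neqAle eq_sym wl_neq0.
have thv := supp_le l lA wl_gt0.
suff -> : v l = th by rewrite mulrC.
by apply/eqP; rewrite eq_le vth thv.
Qed.

End FractionalCover.

Lemma oppr_normM_addr_le (R : realDomainType) (x l r : R) : 0 <= l -> 0 <= r ->
  - (`|x| * (l + r)) <= x * (l - r).
Proof.
move=> l0 r0; rewrite lerNl -mulrN opprB.
apply: le_trans (ler_norm _) _; rewrite normrM ler_wpM2l // ler_norml.
by apply/andP; split; lra.
Qed.

Lemma Pfun_card (R : realType) (m n : nat) (Js : 'I_m -> {set 'I_n})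
    (alpha : 'I_m -> 'I_n -> R) i (x : 'I_n -> R) :
  Pfun Js alpha i #|Js i|%:R x = \sum_(j in Js i) alpha i j * `|x j|.
Proof.
rewrite /Pfun natrK subrr mul0r addr0.
have size_vals : size (sorted_vals Js alpha i x) = #|Js i|.
  by rewrite size_sort size_map -cardE.
rewrite -size_vals -(big_mkord xpredT (nth 0 _)) -(big_nth 0 xpredT id).
by rewrite (perm_big _ (permEl (perm_sort _ _))) big_map big_enum.
Qed.

Section RobustCounterpart.
Variables (R : realType) (m n : nat).
Variables (a : 'I_m -> 'I_n -> R) (b : 'I_m -> R) (Js : 'I_m -> {set 'I_n})
          (alpha : 'I_m -> 'I_n -> R) (xhat : 'I_n -> R) (gl : 'I_m -> R).
Hypothesis alpha_ge0 : forall i j, j \in Js i -> 0 <= alpha i j.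
Hypothesis gl_def : forall i, in_Ihat a b Js alpha xhat i ->
  is_Gamma_low a b Js alpha xhat i (gl i).
Hypothesis gl_unique : forall i, in_Ihat a b Js alpha xhat i ->
  forall g, 0 <= g -> g <= #|Js i|%:R ->
    sres a b xhat i = Pfun Js alpha i g xhat -> g = gl i.

Local Notation s := (sres a b xhat).
Local Notation Ihat := (in_Ihat a b Js alpha xhat).
Local Notation dev i := (fun j => alpha i j * `|xhat j|).

Lemma dev_ge0 i j : j \in Js i -> 0 <= alpha i j * `|xhat j|.
Proof. by move=> jJ; rewrite mulr_ge0 ?alpha_ge0. Qed.

Lemma norm_alpha_xhat i j : j \in Js i -> `|alpha i j * xhat j| = alpha i j * `|xhat j|.
Proof. by move=> jJ; rewrite normrM ger0_norm ?alpha_ge0. Qed.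

Lemma in_IhatP i :
  reflect (Ihat i) ((0 <= s i) && (s i <= \sum_(j in Js i) alpha i j * `|xhat j|)).
Proof. exact: andP. Qed.

Lemma Gamma_low_min_cover i : Ihat i ->
  exists2 w, min_cover (Js i) (dev i) (s i) w & \sum_(j in Js i) w j = gl i.
Proof.
by case/gl_def=> [[w [w_cover <-]] w_min]; exists w => //; split=> // w' /w_min.
Qed.

Lemma Gamma_low_le_card i : Ihat i -> gl i <= #|Js i|%:R.
Proof.
by case/Gamma_low_min_cover=> w [[_ w01] _] <-; exact: unit_weights_sum_le_card.
Qed.

Lemma Gamma_low_full i : Ihat i ->
  s i = \sum_(j in Js i) alpha i j * `|xhat j| -> gl i = #|Js i|%:R.
Proof.
by move=> iI si_full; rewrite -(gl_unique i iI _ (ler0n _ _) (lexx _)) // Pfun_card.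
Qed.

Lemma Theta_bounds G : Theta a b Js alpha xhat gl G ->
  forall i, 0 <= G i /\ G i <= #|Js i|%:R.
Proof.
move=> G_Theta i; have [G_Ihat G_nIhat] := G_Theta i.
have [iI|] := in_IhatP i; last by move/G_nIhat.
by have [G0 Ggl] := G_Ihat iI; split=> //; apply: le_trans Ggl (Gamma_low_le_card i iI).
Qed.

Section Feasible.
Variables (G : 'I_m -> R) (c : 'I_n -> R) (u y : 'I_m -> 'I_n -> R) (z pi : 'I_m -> R)
          (phi lam mu : 'I_m -> 'I_n -> R).
Hypothesis feas : feasible a b Js alpha xhat G c u y z pi phi lam mu.

Lemma feasible_row i : \sum_(j in Js i) y i j + G i * z i <= s i.
Proof. by case: feas => _ _ /(_ i)[row _ _ _ _] _ _; rewrite /sres; lra. Qed.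

Lemma feasible_cover i j : j \in Js i ->
  0 <= y i j /\ alpha i j * `|xhat j| <= y i j + z i.
Proof.
case: feas => _ /(_ i j) feas_ij _ _ _ jJ; have [[u_ge u_geN] yzu y0 _ _] := feas_ij jJ.
split=> //; apply: le_trans yzu; rewrite -norm_alpha_xhat // ler_norml.
by apply/andP; split; lra.
Qed.

Lemma feasible_sres_ge0 i : 0 <= s i.
Proof.
have [_ _ /(_ i)[_ z0 [G0 _] _ _] _ _] := feas.
apply: le_trans (feasible_row i); rewrite addr_ge0 ?mulr_ge0 // sumr_ge0 // => j jJ.
by case: (feasible_cover i j jJ).
Qed.

Lemma feasible_Theta : Theta a b Js alpha xhat gl G.
Proof.
move=> i; have [_ _ /(_ i)[_ z0 [G0 GJ] _ _] _ _] := feas.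
split=> // iI; split=> //.
have [w [[w_dev w01] _] w_gl] := Gamma_low_min_cover i iI.
have := weighted_sum_le_dominated (Js i) (dev i) (feasible_cover i) w01.
rewrite w_dev w_gl mul1r => s_le; have row := feasible_row i.
have [z_eq0|z_neq0] := eqVneq (z i) 0; last first.
  have z_gt0 : 0 < z i by rewrite lt_neqAle eq_sym z_neq0.
  by rewrite -(ler_pM2l z_gt0); lra.
rewrite (Gamma_low_full i iI) //; apply/eqP; rewrite eq_le; have [_ ->] := iI.
apply: le_trans row; rewrite z_eq0 mulr0 addr0; apply: ler_sum => j jJ.
by have [_] := feasible_cover i j jJ; rewrite z_eq0 addr0.
Qed.

Lemma feasible_dev_phi_le i :
  \sum_(j in Js i) alpha i j * `|xhat j| * phi i j <= pi i * s i.
Proof.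
have [_ feas_i /(_ i)[_ z0 _ sum_phi pi0] _ _] := feas.
have phi01 j : j \in Js i -> 0 <= phi i j /\ phi i j <= pi i.
  by move=> jJ; have [_ _ _ [] ? _ []] := feas_i i j jJ.
have := weighted_sum_le_dominated (Js i) (dev i) (feasible_cover i) phi01.
have := ler_wpM2l z0 sum_phi; have := ler_wpM2l pi0 (feasible_row i); nra.
Qed.

Lemma feasible_dev_phi_ge i : - \sum_(j in Js i) alpha i j * `|xhat j| * phi i j <=
  \sum_(j in Js i) alpha i j * xhat j * (lam i j - mu i j).
Proof.
have [_ feas_i _ _ _] := feas; rewrite -sumrN; apply: ler_sum => j jJ.
have [_ _ _ [_ ->] [_ lam0 mu0]] := feas_i i j jJ.
by rewrite -norm_alpha_xhat // oppr_normM_addr_le.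
Qed.

Definition slack i : R :=
  pi i * s i + \sum_(j in Js i) alpha i j * xhat j * (lam i j - mu i j).

Lemma sum_slack : \sum_(i < m) slack i = 0.
Proof.
have [objective _ _ _ def_c] := feas.
have expand_c : \sum_(j < n) c j * xhat j =
    \sum_(i < m) pi i * \sum_(j < n) a i j * xhat j
    + \sum_(i < m) \sum_(j in Js i) alpha i j * xhat j * (lam i j - mu i j).
  under eq_bigr => j _ do rewrite -def_c mulrDl.
  rewrite big_split /=; congr (_ + _); under eq_bigr do rewrite mulr_suml.
    rewrite exchange_big /=; apply: eq_bigr => i _; rewrite mulr_sumr.
    by apply: eq_bigr => j _; ring.
  rewrite (exchange_big_dep xpredT) //=; apply: eq_bigr => i _.
  by apply: eq_bigr => j _; ring.
have sum_pi_b : \sum_(i < m) pi i * b i = \sum_(i < m) b i * pi i.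
  by apply: eq_bigr => i _; rewrite mulrC.
rewrite /slack big_split /=; under eq_bigr do rewrite /sres mulrBr.
by move: objective; rewrite sumrB expand_c; lra.
Qed.

Lemma feasible_tight : exists ih, Ihat ih /\ G ih = gl ih.
Proof.
have [_ feas_i feas_row pi_sum _] := feas.
have slack0 i : slack i = 0.
  apply: (psumr_eq0P _ sum_slack) => // k _.
  by have := feasible_dev_phi_le k; have := feasible_dev_phi_ge k; rewrite /slack; lra.
have [ih /andP[_ pi_gt0]] : exists ih, true && (0 < pi ih).
  apply: psumr_neq0P => [i _|]; first by case: (feas_row i).
  by rewrite pi_sum => /eqP; rewrite oner_eq0.
pose w j := phi ih j / pi ih.
have phiE j : w j * pi ih = phi ih j by rewrite divfK ?gt_eqF.
have w01 : unit_weights (Js ih) w.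
  move=> j jJ; have [_ _ _ [phi_le _] [phi0 _ _]] := feas_i ih j jJ.
  by rewrite divr_ge0 ?ler_pdivrMr ?mul1r // ltW.
have s_le : s ih <= \sum_(j in Js ih) alpha ih j * `|xhat j| * w j.
  rewrite -(ler_pM2r pi_gt0) mulr_suml; under eq_bigr do rewrite -[_ * pi ih]mulrA phiE.
  by have := feasible_dev_phi_ge ih; have := slack0 ih; rewrite /slack; lra.
have sum_w : \sum_(j in Js ih) w j <= G ih.
  have [_ _ _ sum_phi _] := feas_row ih.
  by rewrite -(ler_pM2r pi_gt0) mulr_suml; under eq_bigr do rewrite phiE.
have ihI : Ihat ih.
  split; first exact: feasible_sres_ge0.
  apply: le_trans s_le _; apply: ler_sum => j jJ; have [_ w1] := w01 j jJ.
  by rewrite ler_piMr ?dev_ge0.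
have [w' w'_cover w'_le] :=
  cover_rescale (Js ih) (dev ih) w01 (feasible_sres_ge0 ih) s_le.
exists ih; split=> //; apply/eqP; rewrite eq_le.
have [/(_ ihI)[_ ->] _] := feasible_Theta ih.
exact: le_trans ((gl_def ih ihI).2 w' w'_cover) (le_trans w'_le sum_w).
Qed.

End Feasible.

Section Converse.
Hypothesis b_le_ax : forall i, b i <= \sum_(j < n) a i j * xhat j.
Variable G : 'I_m -> R.
Hypothesis G_Theta : Theta a b Js alpha xhat gl G.

Lemma exists_threshold i : exists2 th, 0 <= th &
  \sum_(j in Js i) Num.max (alpha i j * `|xhat j| - th) 0 + G i * th <= s i.
Proof.
have s_ge0 : 0 <= s i by rewrite subr_ge0.
have [s_le|s_gt] := lerP (s i) (\sum_(j in Js i) alpha i j * `|xhat j|).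
  have iI : Ihat i by [].
  have [w w_min w_gl] := Gamma_low_min_cover i iI.
  have [th th0 th_eq] := min_cover_threshold (Js i) (dev i) (dev_ge0 i) w_min.
  have [/(_ iI)[_ G_le] _] := G_Theta i.
  by exists th => //; rewrite -[X in _ <= X]th_eq w_gl lerD2l ler_wpM2r.
exists 0 => //; rewrite mulr0 addr0.
rewrite (eq_bigr (fun j => alpha i j * `|xhat j|)) => [|j jJ]; last first.
  by rewrite subr0 max_l ?dev_ge0.
exact: ltW.
Qed.

Section Witness.
Variables (th : 'I_m -> R) (ih : 'I_m) (w : 'I_n -> R).
Hypothesis th_ge0 : forall i, 0 <= th i.
Hypothesis th_row : forall i,
  \sum_(j in Js i) Num.max (alpha i j * `|xhat j| - th i) 0 + G i * th i <= s i.
Hypothesis w_cover : is_cover (Js ih) (dev ih) (s ih) w.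
Hypothesis w_sum : \sum_(j in Js ih) w j = G ih.

Definition pi_w i : R := (i == ih)%:R.
Definition phi_w i j : R := w j *+ (i == ih).
Definition lam_w i j : R := phi_w i j *+ (xhat j < 0)%R.
Definition mu_w i j : R := phi_w i j *+ (0 <= xhat j)%R.
Definition y_w i j : R := Num.max (alpha i j * `|xhat j| - th i) 0.
Definition c_w j : R := \sum_(i < m) a i j * pi_w i
  + \sum_(i < m | j \in Js i) alpha i j * (lam_w i j - mu_w i j).

Lemma lam_mu_w i j : alpha i j * (lam_w i j - mu_w i j) * xhat j =
  - (alpha ih j * `|xhat j| * w j) *+ (i == ih).
Proof.
rewrite /lam_w /mu_w /phi_w; case: (eqVneq i ih) => [->|_]; last first.
  by rewrite !mulr0n !mul0rn subr0 mulr0 mul0r.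
case: (ltrP (xhat j) 0) => x0; rewrite ?(ltr0_norm x0) ?(ger0_norm x0) /=; ring.
Qed.

Lemma c_w_mul j : c_w j * xhat j =
  a ih j * xhat j - (alpha ih j * `|xhat j| * w j) *+ (j \in Js ih).
Proof.
rewrite /c_w mulrDl !mulr_suml.
under eq_bigr do rewrite /pi_w mulrAC mulr_natr.
under [X in _ + X]eq_bigr do rewrite lam_mu_w.
by rewrite !sumr_delta mulNrn.
Qed.

Lemma objective_w : \sum_(j < n) c_w j * xhat j - \sum_(i < m) b i * pi_w i = 0.
Proof.
have [/= w_dev _] := w_cover.
under eq_bigr do rewrite c_w_mul mulrb.
rewrite sumrB -big_mkcond w_dev.
under [X in _ - X]eq_bigr do rewrite /pi_w mulr_natr.
by rewrite sumr_delta /sres mulr1n subKr subrr.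
Qed.

Lemma feasible_w : feasible a b Js alpha xhat G c_w (fun i j => alpha i j * `|xhat j|)
  y_w th pi_w phi_w lam_w mu_w.
Proof.
have [_ w01] := w_cover.
split=> [|i j jJ|i||//]; first exact: objective_w.
- have y0 : 0 <= y_w i j by rewrite /y_w le_max lexx orbT.
  have yz : alpha i j * `|xhat j| <= y_w i j + th i.
    by rewrite -lerBlDr /y_w le_max lexx.
  have /andP[lo hi] :
      - (alpha i j * `|xhat j|) <= alpha i j * xhat j <= alpha i j * `|xhat j|.
    by rewrite -ler_norml norm_alpha_xhat.
  split=> //; first by split; lra.
    rewrite /pi_w /lam_w /mu_w /phi_w; case: (eqVneq i ih) => [eq_i|_] /=; last first.
      by rewrite !mulr0n !mul0rn addr0.
    subst i; have [_ w1] := w01 j jJ; rewrite !mulr1n; split=> //.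
    by case: (ltrP (xhat j) 0) => /=; rewrite ?mulr1n ?mulr0n ?addr0 ?add0r.
  rewrite /lam_w /mu_w /phi_w; case: (eqVneq i ih) => [eq_i|_] /=; last first.
    by rewrite !mulr0n !mul0rn.
  by subst i; have [w0 _] := w01 j jJ; rewrite !mulr1n; split=> //; apply: mulrn_wge0.
- have [G0 GJ] := Theta_bounds G G_Theta i.
  split=> //; first by have := th_row i; rewrite /sres; lra.
  rewrite /pi_w /phi_w; case: (eqVneq i ih) => [->|_] /=.
    by rewrite w_sum mulr1.
  by rewrite big1 ?mulr0.
- by rewrite sumr_delta.
Qed.

End Witness.

Lemma feasible_of_Theta : (exists ih, Ihat ih /\ G ih = gl ih) ->
  exists c u y z pi phi lam mu, feasible a b Js alpha xhat G c u y z pi phi lam mu.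
Proof.
move=> [ih [ihI G_gl]].
have [th th_ge0 th_row] := fin_all_exists2 exists_threshold.
have [w [w_cover _] w_gl] := Gamma_low_min_cover ih ihI.
by do 8 eexists; apply: (feasible_w th ih w th_ge0 th_row w_cover); rewrite w_gl.
Qed.

End Converse.

End RobustCounterpart.

Theorem lemma3 (R : realType) (m n : nat)
  (a : 'I_m -> 'I_n -> R) (b : 'I_m -> R) (Js : 'I_m -> {set 'I_n})
  (alpha : 'I_m -> 'I_n -> R) (xhat : 'I_n -> R) (gl : 'I_m -> R)
  (alpha_ge0 : forall i j, j \in Js i -> 0 <= alpha i j)
  (gl_def : forall i, in_Ihat a b Js alpha xhat i -> is_Gamma_low a b Js alpha xhat i (gl i))
  (gl_unique : forall i, in_Ihat a b Js alpha xhat i ->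
     forall g, 0 <= g -> g <= #|Js i|%:R ->
       sres a b xhat i = Pfun Js alpha i g xhat -> g = gl i) :
  (forall G c u y z pi phi lam mu,
     feasible a b Js alpha xhat G c u y z pi phi lam mu ->
     Theta a b Js alpha xhat gl G /\
     exists ih, in_Ihat a b Js alpha xhat ih /\ G ih = gl ih)
  /\
  ((forall i, \sum_(j < n) a i j * xhat j >= b i) ->
   forall G, Theta a b Js alpha xhat gl G ->
   (exists ih, in_Ihat a b Js alpha xhat ih /\ G ih = gl ih) ->
   exists c u y z pi phi lam mu,
     feasible a b Js alpha xhat G c u y z pi phi lam mu).
Proof.
split=> [G c u y z pi phi lam mu feas | b_le_ax G G_Theta].
  by split; [exact: feasible_Theta feas | exact: feasible_tight feas].
exact: feasible_of_Theta.
Qed.
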